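(* Let $P$ be a probability distribution on a finite alphabet $\mathcal A=\{a_1,a_2,\dots,a_{|\mathcal A|}\}$ (with $a_1\neq a_2$), and suppose that for some integer $s\ge1$ and some constant $\delta_0\in(0,1)$, $$\frac{3}{s\delta_0}<\min\{P(a_1),P(a_2)\}.$$ Let $\hat P$ be an empirical type over $\mathcal A^s$ such that $\min\Big\{\frac{\hat P(a_1)}{P(a_1)},\frac{P(a_2)}{\hat P(a_2)}\Big\}\ge\delta_0$ and $\hat P(a_2)\ge 1/s$. Define $\bar P$ by $\bar P(a_1)=\hat P(a_1)-\frac3s$, $\bar P(a_2)=\hat P(a_2)+\frac3s$, and $\bar P(a_i)=\hat P(a_i)$ for all $a_i\in\mathcal A\setminus\{a_1,a_2\}$. Then $$P^s(T(\bar P))\ge\delta\,P^s(T(\hat P))$$ for some strictly positive constant $\delta=\delta(\delta_0)$ depending only on $\delta_0$.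
   Context: An empirical type over $\mathcal A^s$ is a distribution $\hat P$ on $\mathcal A$ such that $\hat P(a)$ is an integer multiple of $1/s$ for every $a\in\mathcal A$. $P^s$ denotes the product distribution induced by $P$ on $\mathcal A^s$, and $T(\hat P)$ (resp. $T(\bar P)$) denotes the set of sequences in $\mathcal A^s$ whose empirical distribution equals $\hat P$ (resp. $\bar P$). *)

From mathcomp Require Import all_boot all_order all_algebra.
From mathcomp Require Import reals.
Set Implicit Arguments. Unset Strict Implicit. Unset Printing Implicit Defensive.
Import Order.TTheory GRing.Theory Num.Theory.
Local Open Scope ring_scope.

Section Types.
Variables (R : realType) (A : finType).

Definition is_distr (P : A -> R) : Prop :=
  (forall a, 0 <= P a) /\ \sum_(a : A) P a = 1.

Definition empirical_type (s : nat) (Q : A -> R) : Prop :=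
  is_distr Q /\ forall a, exists k : nat, Q a = k%:R / s%:R.

Definition emp_dist (s : nat) (x : s.-tuple A) (a : A) : R :=
  (count_mem a x)%:R / s%:R.

Definition type_class (s : nat) (Q : A -> R) : {set s.-tuple A} :=
  [set x : s.-tuple A | [forall a, emp_dist x a == Q a]].

Definition prodP (s : nat) (P : A -> R) (E : {set s.-tuple A}) : R :=
  \sum_(x in E) \prod_(i < s) P (tnth x i).

Definition shift_type (s : nat) (a1 a2 : A) (Q : A -> R) (a : A) : R :=
  if a == a1 then Q a1 - 3%:R / s%:R
  else if a == a2 then Q a2 + 3%:R / s%:R
  else Q a.

End Types.

From mathcomp Require Import all_boot all_order all_algebra perm.
From mathcomp Require Import reals ring lra zify.
Set Implicit Arguments. Unset Strict Implicit. Unset Printing Implicit Defensive.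
Import Order.TTheory GRing.Theory Num.Theory.
Local Open Scope ring_scope.

(* Moving one unit of count from a1 to a2 (i.e. mass 1/s) multiplies P^s(T(Q))
   exactly by (n1 / (n2 + 1)) * (P a2 / P a1), where n_i = s Q(a_i): this is a
   double-counting identity obtained by swapping a1 and a2 at one coordinate.
   The hypotheses give n1 >= 3, n2 >= 1 and n1 P(a2) >= delta0^2 n2 P(a1), so
   each of the three unit moves from Phat to Pbar costs at most a factor
   delta0^2 / 12. *)

Section RelabelAt.
Variables (A : finType) (s : nat).

Definition relabel_at (f : A -> A) (i : 'I_s) (x : s.-tuple A) : s.-tuple A :=
  [tuple if j == i then f (tnth x j) else tnth x j | j < s].

Lemma tnth_relabel_at f i x j :
  tnth (relabel_at f i x) j = if j == i then f (tnth x j) else tnth x j.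
Proof. exact: tnth_mktuple. Qed.

Lemma relabel_atK f i : involutive f -> involutive (relabel_at f i).
Proof.
move=> fK x; apply: eq_from_tnth => j; rewrite !tnth_relabel_at.
by case: (j == i) => //; rewrite fK.
Qed.

Lemma count_mem_tnth (x : s.-tuple A) a :
  (count_mem a x = \sum_(j < s) (tnth x j == a))%N.
Proof. by rewrite -sum1_count big_tuple big_mkcond /=. Qed.

Lemma count_relabel_at f i x a :
  (count_mem a (relabel_at f i x) + (a == tnth x i) =
   count_mem a x + (a == f (tnth x i)))%N.
Proof.
rewrite !count_mem_tnth (bigD1 i) //= [in RHS](bigD1 i) //=.
rewrite tnth_relabel_at eqxx.
under eq_bigr => j ji do rewrite tnth_relabel_at (negbTE ji).
by rewrite ![a == _]eq_sym; lia.
Qed.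

Lemma prod_relabel_at (R : comPzSemiRingType) (P : A -> R) f i x :
  (\prod_(j < s) P (tnth (relabel_at f i x) j)) * P (tnth x i) =
  (\prod_(j < s) P (tnth x j)) * P (f (tnth x i)).
Proof.
rewrite (bigD1 i) //= [in RHS](bigD1 i) //= tnth_relabel_at eqxx.
under eq_bigr => j ji do rewrite tnth_relabel_at (negbTE ji).
by rewrite mulrAC [RHS]mulrC mulrA.
Qed.

End RelabelAt.

Lemma eq_type_class (R : realType) (A : finType) (s : nat) (Q Q' : A -> R) :
  Q =1 Q' -> type_class s Q = type_class s Q'.
Proof.
by move=> eQ; apply/setP => x; rewrite !inE; apply: eq_forallb => a; rewrite eQ.
Qed.

Section MoveMass.
Variables (R : realType) (A : finType) (s : nat) (a1 a2 : A) (P : A -> R).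
Hypotheses (a12 : a1 != a2) (s_gt0 : (0 < s)%N).

Let sR_neq0 : s%:R != 0 :> R. Proof. by rewrite pnatr_eq0 -lt0n. Qed.

Definition move_mass (m : R) (Q : A -> R) (a : A) : R :=
  Q a - m * ((a == a1)%:R - (a == a2)%:R) / s%:R.

Lemma move_mass0 Q : move_mass 0 Q =1 Q.
Proof. by move=> a; rewrite /move_mass mul0r mul0r subr0. Qed.

Lemma move_massD m n Q : move_mass m (move_mass n Q) =1 move_mass (m + n) Q.
Proof. by move=> a; rewrite /move_mass; ring. Qed.

Lemma shift_typeE Q : shift_type s a1 a2 Q =1 move_mass 3 Q.
Proof.
move=> a; rewrite /shift_type /move_mass.
case: (eqVneq a a1) => [->|_]; first by rewrite (negbTE a12) /=; ring.
case: (eqVneq a a2) => [->|_] /=; first by ring.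
by rewrite subrr mulr0 mul0r subr0.
Qed.

Lemma move_mass_a1 m Q : s%:R * move_mass m Q a1 = s%:R * Q a1 - m.
Proof. by rewrite /move_mass eqxx (negbTE a12) /=; field. Qed.

Lemma move_mass_a2 m Q : s%:R * move_mass m Q a2 = s%:R * Q a2 + m.
Proof. by rewrite /move_mass eqxx eq_sym (negbTE a12) /=; field. Qed.

Local Notation flip i := (relabel_at (tperm a1 a2) i).

Lemma emp_dist_flip (i : 'I_s) (y : s.-tuple A) a : tnth y i = a2 ->
  emp_dist R (flip i y) a = emp_dist R y a + ((a == a1)%:R - (a == a2)%:R) / s%:R.
Proof.
move=> yi; have := count_relabel_at (tperm a1 a2) i y a.
rewrite yi tpermR => /(congr1 (fun n => n%:R : R)); rewrite !natrD => e.
rewrite /emp_dist -mulrDl; congr (_ / _).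
by apply: (addIr (a == a2)%:R); rewrite e; ring.
Qed.

Lemma flip_in_type_class Q (i : 'I_s) (y : s.-tuple A) : tnth y i = a2 ->
  (flip i y \in type_class s Q) = (y \in type_class s (move_mass 1 Q)).
Proof.
move=> yi; rewrite !inE; apply: eq_forallb => a.
by rewrite emp_dist_flip // /move_mass mul1r [RHS]eq_sym subr_eq eq_sym.
Qed.

Lemma count_type_class (Q : A -> R) (x : s.-tuple A) a :
  x \in type_class s Q -> (count_mem a x)%:R = s%:R * Q a.
Proof.
rewrite inE => /forallP /(_ a) /eqP <-.
by rewrite /emp_dist mulrC divfK.
Qed.

Lemma prodP_move_mass Q :
  prodP P (type_class s Q) * (s%:R * Q a1) * P a2 =
  prodP P (type_class s (move_mass 1 Q)) * (s%:R * move_mass 1 Q a2) * P a1.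
Proof.
have expand Q' a c : prodP P (type_class s Q') * (s%:R * Q' a) * c =
    \sum_(j < s) \sum_(x in type_class s Q')
       (\prod_(k < s) P (tnth x k)) * (tnth x j == a)%:R * c.
  rewrite /prodP !mulr_suml exchange_big; apply: eq_bigr => x xQ.
  rewrite -(count_type_class a xQ) count_mem_tnth natr_sum.
  by rewrite mulr_sumr mulr_suml.
rewrite !expand; apply: eq_bigr => i _.
rewrite (reindex_inj (can_inj (relabel_atK i (tpermK a1 a2)))) /=.
rewrite big_mkcond [RHS]big_mkcond; apply: eq_bigr => y _.
rewrite tnth_relabel_at eqxx.
have [yi|yi] := eqVneq (tnth y i) a2.
  rewrite flip_in_type_class // yi tpermR !eqxx !mulr1.
  by case: ifP => // _; rewrite -yi prod_relabel_at yi tpermR.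
have -> : (tperm a1 a2 (tnth y i) == a1) = false.
  by apply/negbTE; rewrite -{2}(tpermR a1 a2) (inj_eq perm_inj).
by rewrite !mulr0 !mul0r; case: ifP; case: ifP.
Qed.

Lemma prodP_move_mass_ge t Q : (forall a, 0 <= P a) ->
  0 < s%:R * move_mass 1 Q a2 * P a1 ->
  t * (s%:R * move_mass 1 Q a2) * P a1 <= s%:R * Q a1 * P a2 ->
  t * prodP P (type_class s Q) <= prodP P (type_class s (move_mass 1 Q)).
Proof.
move=> P_ge0 pos ratio; set W := prodP P (type_class s Q).
rewrite -(ler_pM2r pos) [X in _ <= X]mulrA -prodP_move_mass -/W -[X in _ <= X]mulrA.
have -> : t * W * (s%:R * move_mass 1 Q a2 * P a1) =
          W * (t * (s%:R * move_mass 1 Q a2) * P a1) by ring.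
by apply: ler_wpM2l => //; apply: sumr_ge0 => x _; apply: prodr_ge0.
Qed.

Lemma prodP_move_mass_iter t m Q : 0 <= t -> (forall a, 0 <= P a) ->
  (forall k : nat, (k < m)%N ->
     0 < s%:R * move_mass k.+1%:R Q a2 * P a1 /\
     t * (s%:R * move_mass k.+1%:R Q a2) * P a1 <= s%:R * move_mass k%:R Q a1 * P a2) ->
  t ^+ m * prodP P (type_class s Q) <= prodP P (type_class s (move_mass m%:R Q)).
Proof.
move=> t_ge0 P_ge0; elim: m => [_|m IH step].
  by rewrite expr0 mul1r (eq_type_class s (move_mass0 Q)).
have [pos ratio] := step m (ltnSn m).
rewrite mulrS -move_massD in pos ratio.
rewrite mulrS -(eq_type_class s (move_massD 1 m%:R Q)).
apply: le_trans (prodP_move_mass_ge P_ge0 pos ratio).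
rewrite exprS -mulrA; apply: ler_wpM2l => //.
by apply: IH => k km; apply: step; rewrite ltnS ltnW.
Qed.

End MoveMass.

Lemma shifted_ratio_bound (F : realFieldType) (c n1 n2 p1 p2 k : F) :
  0 <= c -> 0 <= p1 -> 0 <= p2 -> 1 <= n2 -> 3 <= n1 -> 0 <= k <= 2 ->
  c * n2 * p1 <= n1 * p2 -> c / 12 * (n2 + k + 1) * p1 <= (n1 - k) * p2.
Proof.
move=> c0 p10 p20 n2_ge1 n1_ge3 /andP[k0 k2] key.
have cp0 : 0 <= c * p1 by rewrite mulr_ge0.
have : c * p1 * (n2 + k + 1) <= c * p1 * (4 * n2) by apply: ler_wpM2l => //; lra.
have : n1 * p2 <= 3 * ((n1 - k) * p2) by rewrite mulrA; apply: ler_wpM2r => //; lra.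
lra.
Qed.

Lemma closeness_count_bounds (F : realFieldType) (d p1 p2 q1 q2 : F) (s : nat) :
  0 < d -> (0 < s)%N ->
  3%:R / (s%:R * d) < Num.min p1 p2 ->
  d <= Num.min (q1 / p1) (p2 / q2) ->
  1 / s%:R <= q2 ->
  [/\ 0 < p1, 0 < p2, 3 <= s%:R * q1, 1 <= s%:R * q2
    & d ^+ 2 * (s%:R * q2) * p1 <= s%:R * q1 * p2].
Proof.
move=> d_gt0 s_gt0; rewrite lt_min le_min => /andP[p1_big p2_big] /andP[].
have sR_gt0 : 0 < s%:R :> F by rewrite ltr0n.
have thr_gt0 : 0 < 3%:R / (s%:R * d) :> F by rewrite divr_gt0 ?mulr_gt0.
have p1_gt0 : 0 < p1 := lt_trans thr_gt0 p1_big.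
have p2_gt0 : 0 < p2 := lt_trans thr_gt0 p2_big.
move=> + + q2_big; have q2_gt0 : 0 < q2.
  by apply: lt_le_trans q2_big; rewrite divr_gt0.
rewrite ler_pdivlMr // ler_pdivlMr // => q1_close q2_close.
rewrite ler_pdivrMr // mulrC in q2_big.
rewrite ltr_pdivrMr ?mulr_gt0 // in p1_big.
split => //.
  apply: ltW (lt_le_trans p1_big _).
  by rewrite mulrCA ler_pM2l // mulrC.
have -> : d ^+ 2 * (s%:R * q2) * p1 = s%:R * ((d * p1) * (d * q2)) by ring.
rewrite -[X in _ <= X]mulrA ler_pM2l //.
by apply: ler_pM => //; rewrite mulr_ge0 ?ltW.
Qed.

Theorem lemma1 (R : realType) (delta0 : R) :
  0 < delta0 < 1 ->
  exists delta : R, 0 < delta /\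
  forall (A : finType) (a1 a2 : A) (P : A -> R) (s : nat) (Phat : A -> R),
    a1 != a2 ->
    is_distr P ->
    (1 <= s)%N ->
    3%:R / (s%:R * delta0) < Num.min (P a1) (P a2) ->
    empirical_type s Phat ->
    delta0 <= Num.min (Phat a1 / P a1) (P a2 / Phat a2) ->
    1 / s%:R <= Phat a2 ->
    delta * prodP P (type_class s Phat)
      <= prodP P (type_class s (shift_type s a1 a2 Phat)).
Proof.
move=> /andP[d_gt0 _]; set t := delta0 ^+ 2 / 12.
have t_gt0 : 0 < t by rewrite divr_gt0 // exprn_gt0.
exists (t ^+ 3); split; first exact: exprn_gt0.
move=> A a1 a2 P s Phat a12 [P_ge0 _] s_gt0 P_big _ Phat_close Phat2_big.
have [P1_gt0 P2_gt0 n1_ge3 n2_ge1 key] :=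
  closeness_count_bounds d_gt0 s_gt0 P_big Phat_close Phat2_big.
rewrite (eq_type_class s (shift_typeE s a12 Phat)).
apply: prodP_move_mass_iter => //; first exact: ltW.
move=> k k_lt3; rewrite move_mass_a2 // move_mass_a1 // mulrSr addrA.
have k_range : 0 <= (k%:R : R) <= 2 by rewrite ler0n ler_nat -ltnS.
split; first by rewrite mulr_gt0 //; have := ler0n R k; lra.
exact: shifted_ratio_bound (sqr_ge0 _) (ltW P1_gt0) (ltW P2_gt0) n2_ge1 n1_ge3
  k_range key.
Qed.
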